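(* Let $p,q$ be nonzero elements of $D$. Then the matrix $\begin{pmatrix} p & q\\ 0 & 0\end{pmatrix}$ is a product of idempotent $2\times 2$ matrices over $D$ if one of the following holds: (i) $\deg p\ge\deg q$, and either $q(u)>0$ for every real root $u$ of $p$, or $q(u)<0$ for every real root $u$ of $p$; (ii) $\deg q\ge\deg p$, and either $p(z)>0$ for every real root $z$ of $q$, or $p(z)<0$ for every real root $z$ of $q$.
   Context: $D$ denotes the minimal Dress ring of the field $\mathbb{R}(X)$, i.e. the subring of $\mathbb{R}(X)$ generated by $\mathbb{Z}$ and all elements $1/(1+h^2)$ with $h\in\mathbb{R}(X)$; its elements are the rational functions $f/\gamma$ with $f,\gamma\in\mathbb{R}[X]$, $\gamma$ without real roots and $\deg f\le\deg\gamma$. For a rational function $f/g$ ($f,g\in\mathbb{R}[X]$) its degree is $\deg(f/g)=\deg f-\deg g$, and its real roots are the real numbers where it vanishes (for elements of $D$, the real roots of the numerator in reduced form). A matrix $E$ is idempotent if $E^2=E$. *)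

(* The real field R(X) is modelled as {fraction {poly R}}
   over an arbitrary real closed field R (covers R = the reals). *)
From HB Require Import structures.
From mathcomp Require Import all_boot all_order all_algebra.
Set Implicit Arguments. Unset Strict Implicit. Unset Printing Implicit Defensive.
Import Order.TTheory GRing.Theory Num.Theory.
Local Open Scope ring_scope.

Definition no_real_root (R : rcfType) (g : {poly R}) : Prop :=
  forall x : R, ~~ root g x.

Notation RX R := {fraction {poly R}}.

(* membership in the minimal Dress ring D of R(X):
   x = f/g with g without real roots and deg f <= deg g *)
Definition inD (R : rcfType) (x : RX R) : Prop :=
  exists (f g : {poly R}), [/\ g != 0, no_real_root g, (size f <= size g)%N
                            & x = (tofrac f) / (tofrac g)].

Definition rdeg (R : rcfType) (f g : {poly R}) : int :=
  ((size f).-1)%:Z - ((size g).-1)%:Z.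

Definition reval (R : rcfType) (f g : {poly R}) (u : R) : R := f.[u] / g.[u].

Definition mxD (R : rcfType) (A : 'M[RX R]_2) : Prop := forall i j, inD (A i j).

Definition idempotent_mx (K : pzRingType) (n : nat) (E : 'M[K]_n) : Prop :=
  E *m E = E.

Definition prod_idem_D (R : rcfType) (A : 'M[RX R]_2) : Prop :=
  exists s : seq 'M[RX R]_2,
    (forall E, E \in s -> mxD E /\ idempotent_mx E) /\
    A = foldr (fun E B => E *m B) 1%:M s.

(* Write f/gp = mu a and g/gq = mu b with mu a unit of D and a, b, c in D such that
   b c = a (1 - a).  Then [[a, b], [c, 1 - a]] is idempotent and
     [[mu a, mu b], [0, 0]]
       = [[1, 0], [0, 0]] [[0, mu], [0, 1]] [[1, 0], [1, 0]] [[a, b], [c, 1 - a]];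
   case (i) reduces to case (ii) by conjugating with the swap matrix.
   In case (ii) let Gr be the real-root part of g and sg the sign of f/gp at the roots
   of g.  Solving one quadratic equation per root makes sg f gp a square s^2 modulo Gr.
   With G = Gr gp (X^2 + 1), the unit mu = sg (s^2 + G^2) / (gp^2 + G^2) of D is
   congruent to f/gp modulo Gr, so Gr divides 1 - a and cancels the real roots of b in
   c = a (1 - a) / b; the degree hypothesis gives deg c <= 0. *)
From HB Require Import structures.
From mathcomp Require Import all_boot all_order all_algebra.
From mathcomp Require Import ring zify.
From mathcomp Require Import polyrcf.
Set Implicit Arguments. Unset Strict Implicit. Unset Printing Implicit Defensive.
Import Order.TTheory GRing.Theory Num.Theory.
Local Open Scope ring_scope.

Section IdempotentProducts.
Variable R : rcfType.
Local Notation K := (RX R).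

Definition mk2 (x y z w : K) : 'M[K]_2 :=
  \matrix_(i < 2, j < 2) if i == 0 then (if j == 0 then x else y)
                         else (if j == 0 then z else w).

Lemma mk2_eta (A : 'M[K]_2) : A = mk2 (A 0 0) (A 0 1) (A 1 0) (A 1 1).
Proof.
apply/matrixP => i j; rewrite !mxE.
by case: i => [[|[|//]] Hi]; case: j => [[|[|//]] Hj]; congr (A _ _); apply: val_inj.
Qed.

Lemma mul_mk2 x y z w x' y' z' w' :
  mk2 x y z w *m mk2 x' y' z' w' =
  mk2 (x * x' + y * z') (x * y' + y * w') (z * x' + w * z') (z * y' + w * w').
Proof.
apply/matrixP => i j; rewrite !mxE !big_ord_recr big_ord0 /= !mxE add0r.
by case: i => [[|[|//]] Hi]; case: j => [[|[|//]] Hj].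
Qed.

Lemma mx1_mk2 : 1%:M = mk2 1 0 0 1.
Proof.
apply/matrixP => i j; rewrite !mxE.
by case: i => [[|[|//]] Hi]; case: j => [[|[|//]] Hj].
Qed.

Lemma top_row_mk2 x y :
  \matrix_(i < 2, j < 2) (if i == 0 then (if j == 0 then x else y) else 0) = mk2 x y 0 0.
Proof.
apply/matrixP => i j; rewrite !mxE.
by case: i => [[|[|//]] Hi]; case: j => [[|[|//]] Hj].
Qed.

Lemma mxD_mk2 x y z w : inD x -> inD y -> inD z -> inD w -> mxD (mk2 x y z w).
Proof.
move=> Dx Dy Dz Dw i j; rewrite !mxE.
by case: i => [[|[|//]] Hi]; case: j => [[|[|//]] Hj].
Qed.

Lemma inD0 : inD (0 : K).
Proof.
exists 0, 1; split; rewrite ?oner_neq0 ?size_poly0 ?tofrac0 ?mul0r //.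
by move=> x; rewrite rootC oner_neq0.
Qed.

Lemma inD1 : inD (1 : K).
Proof.
exists 1, 1; split; rewrite ?oner_neq0 ?tofrac1 ?divr1 //.
by move=> x; rewrite rootC oner_neq0.
Qed.

Lemma inD1B (a : K) : inD a -> inD (1 - a).
Proof.
case=> f [g [g0 ng sfg ->]]; exists (g - f), g; split => //.
  by rewrite (leq_trans (size_polyD _ _)) // size_polyN geq_max leqnn.
by rewrite tofracB mulrBl divff // tofrac_eq0.
Qed.

Lemma prod_idem_D1 : prod_idem_D (1%:M : 'M[K]_2).
Proof. by exists [::]. Qed.

Lemma prod_idem_D_cons (E A : 'M[K]_2) :
  mxD E -> idempotent_mx E -> prod_idem_D A -> prod_idem_D (E *m A).
Proof.
move=> DE idE [s [Hs ->]]; exists (E :: s); split => // E'.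
by rewrite inE => /predU1P [->|/Hs].
Qed.

Let swap2 : 'M[K]_2 := mk2 0 1 1 0.

Lemma mulmx_swap2 : swap2 *m swap2 = 1%:M.
Proof. by rewrite mul_mk2 mx1_mk2; congr mk2; ring. Qed.

Lemma prod_idem_D_swap_conj (A : 'M[K]_2) :
  prod_idem_D A -> prod_idem_D (swap2 *m A *m swap2).
Proof.
case=> s [Hs ->]; exists [seq swap2 *m E *m swap2 | E <- s]; split.
  move=> _ /mapP [E /Hs [DE idE] ->]; split.
    rewrite (mk2_eta E) !mul_mk2 !(mul0r, mul1r, mulr0, mulr1, addr0, add0r).
    by apply: mxD_mk2; apply: DE.
  rewrite /idempotent_mx !mulmxA -(mulmxA _ swap2 swap2) mulmx_swap2 mulmx1.
  by rewrite -(mulmxA _ E E) idE.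
elim: s {Hs} => [|E s IH] /=; first by rewrite mulmx1 mulmx_swap2.
by rewrite -IH !mulmxA -(mulmxA _ swap2 swap2) mulmx_swap2 mulmx1.
Qed.

Lemma prod_idem_D_row (mu a b c : K) : inD mu -> inD a -> inD b -> inD c ->
  b * c = a * (1 - a) -> prod_idem_D (mk2 (mu * a) (mu * b) 0 0).
Proof.
move=> Dmu Da Db Dc Ebc; have D0 := inD0; have D1 := inD1; have D1a := inD1B Da.
have -> : mk2 (mu * a) (mu * b) 0 0 =
    mk2 1 0 0 0 *m (mk2 0 mu 0 1 *m (mk2 1 0 1 0 *m (mk2 a b c (1 - a) *m 1%:M))).
  by rewrite mulmx1 !mul_mk2; congr mk2; ring.
do 4 (apply: prod_idem_D_cons;
  [exact: mxD_mk2 | by rewrite /idempotent_mx mul_mk2; congr mk2; ring: Ebc |]).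
exact: prod_idem_D1.
Qed.

Lemma prod_idem_D_row_swap (x y : K) :
  prod_idem_D (mk2 x y 0 0) -> prod_idem_D (mk2 y x 0 0).
Proof.
move=> /prod_idem_D_swap_conj; rewrite !mul_mk2 => PA.
have -> : mk2 y x 0 0 = mk2 1 1 0 0 *m mk2 0 0 y x by rewrite mul_mk2; congr mk2; ring.
apply: prod_idem_D_cons; first exact: mxD_mk2 inD1 inD1 inD0 inD0.
  by rewrite /idempotent_mx mul_mk2; congr mk2; ring.
by move: PA; congr prod_idem_D; congr mk2; ring.
Qed.

End IdempotentProducts.

Lemma tofrac_div_eq (K : idomainType) (a b c d : K) : b != 0 -> d != 0 ->
  a * d = c * b -> tofrac a / tofrac b = tofrac c / tofrac d.
Proof. by move=> b0 d0 Eabcd; apply/eqP; rewrite eqr_div ?tofrac_eq0 // -!tofracM Eabcd. Qed.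

Section PolyIdomain.
Variable K : idomainType.
Implicit Types p q r t : {poly K}.

Lemma size_sqr_addl p q : (size p < size q)%N -> size (p ^+ 2 + q ^+ 2) = size (q ^+ 2).
Proof.
move=> ltpq; have q0 : q != 0 by rewrite -size_poly_gt0 (leq_ltn_trans _ ltpq).
rewrite addrC size_addl // !expr2 (size_mul q0 q0).
by apply: leq_ltn_trans (size_polyMleq p p) _; lia.
Qed.

Lemma leq_size_mul p q r t : q != 0 -> t != 0 ->
  (size p <= size q)%N -> (size r <= size t)%N -> (size (p * r)%R <= size (q * t)%R)%N.
Proof.
move=> q0 t0 pq rt; rewrite (size_mul q0 t0).
by apply: leq_trans (size_polyMleq p r) _; lia.
Qed.

End PolyIdomain.

Lemma dvdp_sqr_modp (K : fieldType) (d s F : {poly K}) :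
  d %| s ^+ 2 - F -> d %| (s %% d) ^+ 2 - F.
Proof.
have Ds := divp_eq s d; set k := s %/ d in Ds *; set r := s %% d in Ds *.
have -> : r ^+ 2 - F = (s ^+ 2 - F) - d * (k * (k * d + 2%:R * r)) by rewrite Ds; ring.
by move=> dvd_s; rewrite dvdp_sub // dvdp_mulIl.
Qed.

Section RealPolynomials.
Variable R : rcfType.
Implicit Types (p q f g : {poly R}) (rs : seq R).

Lemma no_real_root_neq0 p : no_real_root p -> p != 0.
Proof. by move=> np; apply: contraNneq (np 0) => ->; rewrite root0. Qed.

Lemma no_real_rootM p q : no_real_root p -> no_real_root q -> no_real_root (p * q).
Proof. by move=> np nq x; rewrite rootM negb_or np nq. Qed.

Lemma no_real_root_X2D1 : no_real_root ('X^2 + 1 : {poly R}).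
Proof. by move=> x; rewrite /root !hornerE gt_eqF // ltr_wpDl ?sqr_ge0. Qed.

Lemma inD_frac f g : no_real_root g -> (size f <= size g)%N -> inD (tofrac f / tofrac g).
Proof. by move=> ng sfg; exists f, g; split => //; apply: no_real_root_neq0. Qed.

Lemma root_rootsR p x : p != 0 -> root p x = (x \in rootsR p).
Proof. by move=> p0; rewrite -roots_on_rootsR. Qed.

Lemma poly_split_real_roots g : g != 0 ->
  exists rs gc, no_real_root gc /\ g = \prod_(z <- rs) ('X - z%:P) * gc.
Proof.
move=> g0; have [n] := ubnP (size g); elim: n g g0 => // n IH g g0 sg.
case E: (rootsR g) => [|x xs].
  by exists [::], g; rewrite big_nil mul1r; split=> // x; rewrite root_rootsR // E.
have /factor_theorem [q Dq] : root g x by rewrite root_rootsR // E mem_head.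
have q0 : q != 0 by apply: contraNneq g0; rewrite Dq => ->; rewrite mul0r.
have [|rs [gc [ngc Dq']]] := IH q q0.
  by move: sg; rewrite Dq size_mul ?polyXsubC_eq0 // size_XsubC addn2.
by exists (x :: rs), gc; split; rewrite // Dq Dq' big_cons; ring.
Qed.

Lemma quadratic_has_root (a b c : R) : 0 < b ^+ 2 - a * c ->
  exists t, a * t ^+ 2 + 2%:R * b * t + c = 0.
Proof.
have two0 : 2%:R != 0 :> R by rewrite pnatr_eq0.
move=> disc; have [a0|a0] := eqVneq a 0.
  have b0 : b != 0 by apply: contraTneq disc => ->; rewrite a0 mul0r expr0n subrr ltxx.
  by exists (- c / (2%:R * b)); rewrite a0; field.
exists ((Num.sqrt (b ^+ 2 - a * c) - b) / a).
have sq := sqr_sqrtr (ltW disc); move: (Num.sqrt _) sq => r sq.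
by field: sq.
Qed.

Lemma sqrt_mod_prod_XsubC rs (F : {poly R}) : {in rs, forall z, 0 < F.[z]} ->
  exists s, \prod_(z <- rs) ('X - z%:P) %| s ^+ 2 - F.
Proof.
elim: rs => [|x rs IH] Fpos; first by exists 0; rewrite big_nil dvd1p.
have [|s0 /dvdpP [m Dm]] := IH; first by move=> z zrs; apply: Fpos; rewrite inE zrs orbT.
set G := \prod_(z <- rs) _ in Dm.
(* Lift s0 to s0 + c G: x is a root of the new quotient N iff c solves a quadratic
   equation of discriminant 4 F(x) > 0. *)
have [c Dc] : exists c, G.[x] * c ^+ 2 + 2%:R * s0.[x] * c + m.[x] = 0.
  apply: quadratic_has_root; have := congr1 (horner^~ x) Dm; rewrite /= !hornerE => Dmx.
  have -> : s0.[x] ^+ 2 - G.[x] * m.[x] = F.[x] by rewrite mulrC -Dmx; ring.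
  exact/Fpos/mem_head.
set N := m + 2%:R * c%:P * s0 + c%:P ^+ 2 * G.
have /factor_theorem [q Dq] : root N x by apply/rootP; rewrite !hornerE -Dc; ring.
exists (s0 + c%:P * G); apply/dvdpP; exists q.
have -> : F = s0 ^+ 2 - m * G by rewrite -Dm; ring.
by rewrite big_cons -/G mulrA -Dq /N; ring.
Qed.

Lemma exists_unit_congr_mod_prod_XsubC (sg : R) f gp rs :
  sg ^+ 2 = 1 -> no_real_root gp -> {in rs, forall z, 0 < sg * (f.[z] * gp.[z])} ->
  exists U W, [/\ no_real_root U, no_real_root W, size U = size W &
               \prod_(z <- rs) ('X - z%:P) %| gp * U - f * W].
Proof.
move=> sg2 ngp Fpos; set Gr := \prod_(z <- rs) _.
have sg0 : sg != 0 by rewrite -sqrf_eq0 sg2 oner_neq0.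
set F := sg%:P * (f * gp).
have [s0 /dvdp_sqr_modp dvd_s] : exists s0, Gr %| s0 ^+ 2 - F.
  by apply: sqrt_mod_prod_XsubC => z /Fpos; rewrite !hornerE.
set s := s0 %% Gr in dvd_s.
have Gr0 : Gr != 0 := monic_neq0 (monic_prod_XsubC _ _ _).
have gp0 := no_real_root_neq0 ngp; have T0 := no_real_root_neq0 no_real_root_X2D1.
(* G vanishes modulo Gr and dominates s and gp in degree, so U and W have equal size
   and are congruent to sg s^2 and gp^2 modulo Gr. *)
set G := Gr * gp * ('X^2 + 1).
have sG : size G = (size Gr + size gp).+1.
  rewrite /G !size_mul ?mulf_neq0 // size_addl ?size_polyXn ?size_poly1 //.
  have : (0 < size Gr)%N by rewrite size_poly_gt0.
  have : (0 < size gp)%N by rewrite size_poly_gt0.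
  set a := size Gr; set b := size gp; lia.
have ltGrG : (size Gr < size G)%N by rewrite sG ltnS leq_addr.
have ltgpG : (size gp < size G)%N by rewrite sG ltnS leq_addl.
have ltsG : (size s < size G)%N := ltn_trans (ltn_modpN0 s0 Gr0) ltGrG.
exists (sg%:P * (s ^+ 2 + G ^+ 2)), (gp ^+ 2 + G ^+ 2); split.
- move=> x; rewrite /root !hornerE mulf_eq0 (negbTE sg0) /= paddr_eq0 ?sqr_ge0 //.
  rewrite !sqrf_eq0; apply/andP => -[/eqP sx0 Gx0].
  have Grx : root Gr x.
    move: Gx0 (ngp x) (no_real_root_X2D1 x); rewrite /root !hornerE !mulf_eq0.
    by case/orP => [/orP[//|->]|->].
  have := root_dvdp dvd_s Grx; rewrite /root !hornerE sx0 expr0n sub0r oppr_eq0 => /eqP F0.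
  by have := Fpos x; rewrite -root_prod_XsubC -/Gr Grx mulrA F0 ltxx => /(_ isT).
- move=> x; rewrite /root !hornerE paddr_eq0 ?sqr_ge0 // sqrf_eq0.
  by rewrite negb_and ngp.
- by rewrite size_Cmul // !size_sqr_addl.
have sg2P : sg%:P ^+ 2 = 1 :> {poly R} by rewrite -rmorphXn /= sg2.
have -> : gp * (sg%:P * (s ^+ 2 + G ^+ 2)) - f * (gp ^+ 2 + G ^+ 2) =
    sg%:P * gp * (s ^+ 2 - F) + Gr * ((sg%:P * gp - f) * (gp * ('X^2 + 1)) * G).
  by rewrite /F /G; ring: sg2P.
by apply: dvdp_add; [exact: dvdp_mull | exact: dvdp_mulIl].
Qed.

End RealPolynomials.

Section DressRing.
Variable R : rcfType.
Implicit Types f g gp gq : {poly R}.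

Lemma rdeg_le_size f gp g gq : f != 0 -> gp != 0 -> g != 0 -> gq != 0 ->
  (rdeg f gp <= rdeg g gq)%R -> (size f + size gq <= size g + size gp)%N.
Proof. by rewrite /rdeg -!size_poly_gt0 => *; lia. Qed.

Lemma constant_sign_reval f gp g : no_real_root gp ->
  (forall z, root g z -> 0 < reval f gp z) \/ (forall z, root g z -> reval f gp z < 0) ->
  exists sg : R, sg ^+ 2 = 1 /\ forall z, root g z -> 0 < sg * (f.[z] * gp.[z]).
Proof.
move=> ngp sign.
have gpz_sqr_gt0 z : 0 < gp.[z] ^+ 2 by rewrite lt0r sqrf_eq0 sqr_ge0 andbT; exact: ngp.
have Ereval z : f.[z] * gp.[z] = reval f gp z * gp.[z] ^+ 2.
  by rewrite /reval; field; exact: ngp.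
case: sign => sign; [exists 1 | exists (-1)]; rewrite ?sqrrN expr1n.
  by split=> // z /sign; rewrite mul1r Ereval (pmulr_lgt0 _ (gpz_sqr_gt0 z)).
by split=> // z /sign; rewrite mulN1r oppr_gt0 Ereval (pmulr_llt0 _ (gpz_sqr_gt0 z)).
Qed.

Lemma size_cofactor_le f gp gq (U W M Gr gc : {poly R}) :
  gp != 0 -> U != 0 -> Gr != 0 -> gc != 0 -> gp * U - f * W = M * Gr ->
  (size (f * W)%R <= size (gp * U)%R)%N ->
  (size f + size gq <= size (Gr * gc)%R + size gp)%N ->
  (size (f * gq * M)%R <= size (gp ^+ 2 * U * gc)%R)%N.
Proof.
move=> gp0 U0 Gr0 gc0 DM le_fW.
have le_MGr : (size (M * Gr)%R <= size (gp * U)%R)%N.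
  by rewrite -DM (leq_trans (size_polyD _ _)) // size_polyN geq_max leqnn le_fW.
have [->|M0] := eqVneq M 0; first by rewrite mulr0 size_poly0.
have [->|f0] := eqVneq f 0; first by rewrite !mul0r size_poly0.
have [->|gq0] := eqVneq gq 0; first by rewrite mulr0 mul0r size_poly0.
move: le_MGr; rewrite expr2 !size_mul ?mulf_neq0 //.
have := size_poly_gt0 M; have := size_poly_gt0 Gr; have := size_poly_gt0 gc.
have := size_poly_gt0 U; have := size_poly_gt0 gp; rewrite M0 Gr0 gc0 U0 gp0.
set sM := size M; set sGr := size Gr; set sgc := size gc; set sU := size U.
set sgp := size gp; set sf := size f; set sgq := size gq; lia.
Qed.

Lemma idempotent_row_decomposition f gp g gq :
  no_real_root gp -> (size f <= size gp)%N -> no_real_root gq -> (size g <= size gq)%N ->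
  f != 0 -> g != 0 -> (rdeg f gp <= rdeg g gq)%R ->
  (forall z, root g z -> 0 < reval f gp z) \/ (forall z, root g z -> reval f gp z < 0) ->
  exists mu a b c : RX R, [/\ inD mu, inD a, inD b, inD c &
    [/\ b * c = a * (1 - a), mu * a = tofrac f / tofrac gp & mu * b = tofrac g / tofrac gq]].
Proof.
move=> ngp sfgp ngq sggq f0 g0 deg_le sign.
have gp0 := no_real_root_neq0 ngp; have gq0 := no_real_root_neq0 ngq.
have {deg_le} deg_le := rdeg_le_size f0 gp0 g0 gq0 deg_le.
have [sg [sg2 sg_pos]] := constant_sign_reval ngp sign.
have [rs [gc [ngc Dg]]] := poly_split_real_roots g0.
set Gr := \prod_(z <- rs) _ in Dg.
have Fpos : {in rs, forall z, 0 < sg * (f.[z] * gp.[z])}.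
  by move=> z zrs; apply: sg_pos; rewrite Dg rootM root_prod_XsubC zrs.
have [U [W [nU nW sUW /dvdpP [M DM]]]] := exists_unit_congr_mod_prod_XsubC sg2 ngp Fpos.
rewrite -/Gr in DM.
have U0 := no_real_root_neq0 nU; have W0 := no_real_root_neq0 nW.
have gc0 := no_real_root_neq0 ngc.
have Gr0 : Gr != 0 := monic_neq0 (monic_prod_XsubC _ _ _).
have le_fW : (size (f * W)%R <= size (gp * U)%R)%N by apply: leq_size_mul; rewrite ?sUW.
(* c = a (1 - a) / b, where 1 - a = M Gr / (gp U) and Gr cancels against b. *)
exists (tofrac U / tofrac W), (tofrac (f * W) / tofrac (gp * U)),
  (tofrac (g * W) / tofrac (gq * U)), (tofrac (f * gq * M) / tofrac (gp ^+ 2 * U * gc)).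
split; [apply: inD_frac .. | ].
- exact: nW.
- by rewrite sUW.
- exact: no_real_rootM.
- exact: le_fW.
- exact: no_real_rootM.
- by apply: leq_size_mul; rewrite ?sUW.
- by rewrite expr2; repeat apply: no_real_rootM.
- by apply: (size_cofactor_le gp0 U0 Gr0 gc0 DM le_fW); rewrite -Dg.
have E1a : 1 - tofrac (f * W) / tofrac (gp * U) = tofrac (M * Gr) / tofrac (gp * U).
  by rewrite -DM tofracB mulrBl divff // tofrac_eq0 mulf_neq0.
rewrite E1a !mulf_div -!tofracM; split; apply: tofrac_div_eq;
  rewrite ?mulf_neq0 ?expf_neq0 // ?Dg; ring.
Qed.

End DressRing.

Unset Implicit Arguments.

Theorem theorem3p3 (R : rcfType) (f gp g gq : {poly R}) :
  gp != 0 -> no_real_root gp -> (size f <= size gp)%N ->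
  gq != 0 -> no_real_root gq -> (size g <= size gq)%N ->
  f != 0 -> g != 0 ->
  ( ((rdeg g gq <= rdeg f gp)%R /\
      ((forall u : R, root f u -> 0 < reval g gq u) \/
       (forall u : R, root f u -> reval g gq u < 0)))
    \/
    ((rdeg f gp <= rdeg g gq)%R /\
      ((forall z : R, root g z -> 0 < reval f gp z) \/
       (forall z : R, root g z -> reval f gp z < 0))) ) ->
  prod_idem_D (\matrix_(i < 2, j < 2)
     (if i == 0 then (if j == 0 then tofrac f / tofrac gp
                      else tofrac g / tofrac gq) else 0)).
Proof.
move=> _ ngp sfgp _ ngq sggq f0 g0 hyp; rewrite top_row_mk2.
case: hyp => [[deg_le sign] | [deg_le sign]].
- have [mu [a [b [c [Dmu Da Db Dc [Ebc <- <-]]]]]] :=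
    idempotent_row_decomposition ngq sggq ngp sfgp g0 f0 deg_le sign.
  by apply: prod_idem_D_row_swap; apply: (prod_idem_D_row Dmu Da Db Dc Ebc).
- have [mu [a [b [c [Dmu Da Db Dc [Ebc <- <-]]]]]] :=
    idempotent_row_decomposition ngp sfgp ngq sggq f0 g0 deg_le sign.
  exact: prod_idem_D_row Dmu Da Db Dc Ebc.
Qed.
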